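(* Let $\alpha>0$ and let $\mathfrak f(t)=\sum_{n\ge0}\widehat{\mathfrak f}(n)e^{int}$ with $\sum_{n\ge0}n^\alpha|\widehat{\mathfrak f}(n)|<\infty$. Then $\mathfrak f\in A_+^\alpha(\mathbb{T})$, i.e. $\sum_{n\ge0}k^{\alpha+1}(n)|W_+^\alpha\widehat{\mathfrak f}(n)|<\infty$.
   Context: For $\gamma\in\mathbb{R}$, $k^\gamma(0)=1$, $k^\gamma(n)=\frac{\gamma(\gamma+1)\cdots(\gamma+n-1)}{n!}$ for $n\ge1$. For a sequence $f$ on $\mathbb{Z}$ (extended by $0$ for $n<0$ when given on $\mathbb{N}_0$): $W_+f(n)=f(n)-f(n+1)$, $W_+^m$ its powers; for $\alpha>0$, $W_+^{-\alpha}f(n)=\sum_{j\ge n}k^\alpha(j-n)f(j)$ and $W_+^\alpha f=W_+^mW_+^{-(m-\alpha)}f$ with $m=[\alpha]+1$. $A_+^\alpha(\mathbb{T})$ is the space of continuous $2\pi$-periodic functions $\mathfrak f(t)=\sum_{n\ge0}\widehat{\mathfrak f}(n)e^{int}$ with norm $\sum_{n\ge0}k^{\alpha+1}(n)|W_+^\alpha\widehat{\mathfrak f}(n)|<\infty$. *)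

From Stdlib Require Import Reals ZArith Classical ClassicalEpsilon.
Open Scope R_scope.

Definition Cx := (R * R)%type.
Definition Cmod (z : Cx) : R := sqrt (fst z * fst z + snd z * snd z).

(* k^gamma(n) = gamma(gamma+1)...(gamma+n-1)/n!, k^gamma(0)=1 *)
Fixpoint kcoef (g : R) (n : nat) : R :=
  match n with
  | O => 1
  | S p => kcoef g p * (g + INR p) / INR (S p)
  end.

(* n^alpha for n >= 1, and 0^alpha = 0 (alpha > 0) *)
Definition npow (n : nat) (a : R) : R :=
  match n with O => 0 | _ => Rpower (INR n) a end.

Definition Csum (u : nat -> Cx) (l : Cx) : Prop :=
  infinite_sum (fun j => fst (u j)) (fst l) /\ infinite_sum (fun j => snd (u j)) (snd l).

Definition Csummable (u : nat -> Cx) : Prop := exists l, Csum u l.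

(* value of a convergent complex series (0 if divergent; convergence is asserted separately) *)
Definition Cseries (u : nat -> Cx) : Cx :=
  match excluded_middle_informative (Csummable u) with
  | left H => proj1_sig (constructive_indefinite_description _ H)
  | right _ => (0, 0)
  end.

Definition Cscal (r : R) (z : Cx) : Cx := (r * fst z, r * snd z).
Definition Csub (z w : Cx) : Cx := (fst z - fst w, snd z - snd w).

Definition Wplus (f : nat -> Cx) : nat -> Cx := fun n => Csub (f n) (f (S n)).
Fixpoint Wplus_pow (m : nat) (f : nat -> Cx) : nat -> Cx :=
  match m with O => f | S p => Wplus (Wplus_pow p f) end.

Definition Wneg_term (b : R) (f : nat -> Cx) (n : nat) : nat -> Cx :=
  fun j => Cscal (kcoef b j) (f (n + j)%nat).

(* W_+^{-beta} f(n) = sum_{j >= n} k^beta(j-n) f(j) *)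
Definition Wneg (b : R) (f : nat -> Cx) : nat -> Cx :=
  fun n => Cseries (Wneg_term b f n).

(* m = [alpha] + 1 ; for real alpha, up alpha = floor alpha + 1 *)
Definition mfrac (a : R) : nat := Z.to_nat (up a).

Definition Wfrac (a : R) (f : nat -> Cx) : nat -> Cx :=
  Wplus_pow (mfrac a) (Wneg (INR (mfrac a) - a) f).

Definition Rsummable (u : nat -> R) : Prop := exists l, infinite_sum u l.

(* Since k^{g-1}(n) = k^g(n) - k^g(n-1), every application of W_+ lowers the order of
   W_+^{-beta} by one, so W_+^alpha f(n) = sum_N k^{-alpha}(N) f(n+N), where
   sum_N |k^{-alpha}(N)| < oo.  As k^{alpha+1} is nondecreasing,
   k^{alpha+1}(n) |W_+^alpha f(n)| <= sum_N |k^{-alpha}(N)| k^{alpha+1}(n+N) |f(n+N)|, and summing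
   over n bounds the norm by (sum_N |k^{-alpha}(N)|) (sum_L k^{alpha+1}(L) |f(L)|); the last series
   is finite because k^{alpha+1}(L) <= (alpha+1) L^alpha. *)

From Stdlib Require Import Reals ZArith Lra Lia ClassicalEpsilon.
From Coquelicot Require Import Coquelicot.
Open Scope R_scope.

Lemma sum_f_R0_le_Series (a : nat -> R) N :
  (forall n, 0 <= a n) -> ex_series a -> sum_f_R0 a N <= Series a.
Proof.
  intros Hpos Ha. apply sum_incr; [|exact Hpos].
  apply is_series_Reals, Series_correct, Ha.
Qed.

Lemma term_le_Series (a : nat -> R) N :
  (forall n, 0 <= a n) -> ex_series a -> a N <= Series a.
Proof.
  intros Hpos Ha. apply Rle_trans with (sum_f_R0 a N);
    [|exact (sum_f_R0_le_Series a N Hpos Ha)].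
  destruct N as [|N]; simpl; [lra|].
  pose proof (cond_pos_sum a N Hpos). lra.
Qed.

Lemma ex_series_nonneg_le (a b : nat -> R) :
  (forall n, 0 <= a n <= b n) -> ex_series b -> ex_series a.
Proof.
  intros Hab Hb. apply (ex_series_le a b); [|exact Hb].
  intro n. destruct (Hab n). change (Rabs (a n) <= b n). rewrite Rabs_right; lra.
Qed.

Lemma ex_series_of_bounded_sums (a : nat -> R) K :
  (forall n, 0 <= a n) -> (forall N, sum_f_R0 a N <= K) -> ex_series a.
Proof.
  intros Hpos Hbound. destruct (growing_cv (sum_f_R0 a)) as [l Hl].
  - intro n. simpl. pose proof (Hpos (S n)). lra.
  - exists K. intros x [n ->]. apply Hbound.
  - exists l. apply is_series_Reals, Hl.
Qed.

Lemma Series_sum_f_R0 (h : nat -> nat -> R) M :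
  (forall n, ex_series (h n)) ->
  ex_series (fun N => sum_f_R0 (fun n => h n N) M) /\
  Series (fun N => sum_f_R0 (fun n => h n N) M) = sum_f_R0 (fun n => Series (h n)) M.
Proof.
  intros Hh. induction M as [|M [IHex IHeq]]; simpl.
  - split; [exact (Hh 0%nat)|reflexivity].
  - split; [exact (ex_series_plus _ _ IHex (Hh (S M)))|].
    rewrite Series_plus, IHeq; [reflexivity|exact IHex|exact (Hh (S M))].
Qed.

Lemma Series_shift_le (G : nat -> R) N :
  (forall n, 0 <= G n) -> ex_series G -> Series (fun k => G (N + k)%nat) <= Series G.
Proof.
  intros Hpos HG. destruct N as [|N].
  - right. apply Series_ext. reflexivity.
  - rewrite (Series_incr_n G (S N)) by (lia || exact HG).
    pose proof (cond_pos_sum G N Hpos). simpl. lra.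
Qed.

Lemma ex_series_mul_shift (t G : nat -> R) n :
  (forall N, 0 <= t N) -> (forall N, 0 <= G N) -> ex_series t -> ex_series G ->
  ex_series (fun N => t N * G (n + N)%nat).
Proof.
  intros Ht HG Hst HsG.
  apply (ex_series_nonneg_le _ (fun N => t N * Series G)); [|exact (ex_series_scal_r _ _ Hst)].
  intro N. pose proof (term_le_Series G (n + N) HG HsG). pose proof (Ht N).
  pose proof (HG (n + N)%nat). split; nra.
Qed.

Lemma sum_Series_mul_shift_le (t G : nat -> R) M :
  (forall N, 0 <= t N) -> (forall N, 0 <= G N) -> ex_series t -> ex_series G ->
  sum_f_R0 (fun n => Series (fun N => t N * G (n + N)%nat)) M <= Series t * Series G.
Proof.
  intros Ht HG Hst HsG.
  destruct (Series_sum_f_R0 (fun n N => t N * G (n + N)%nat) M) as [_ <-];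
    [intro n; exact (ex_series_mul_shift t G n Ht HG Hst HsG)|].
  rewrite <- Series_scal_r. apply Series_le; [|exact (ex_series_scal_r _ _ Hst)].
  intro N. cbv beta.
  rewrite (sum_eq _ (fun k => G (N + k)%nat * t N)) by (intros; rewrite Nat.add_comm; ring).
  rewrite <- scal_sum. split.
  - apply Rmult_le_pos; [apply Ht|apply cond_pos_sum; intro; apply HG].
  - apply Rmult_le_compat_l; [apply Ht|].
    apply Rle_trans with (Series (fun k => G (N + k)%nat)); [|exact (Series_shift_le G N HG HsG)].
    apply sum_f_R0_le_Series; [intro; apply HG|exact (proj1 (ex_series_incr_n G N) HsG)].
Qed.

Lemma kcoef_S g n : kcoef g (S n) = kcoef g n * (g + INR n) / INR (S n).
Proof. reflexivity. Qed.

Lemma kcoef_sub1_S g n : kcoef (g - 1) (S n) = kcoef g (S n) - kcoef g n.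
Proof.
  induction n as [|n IHn].
  - simpl. field.
  - rewrite kcoef_S, IHn, !kcoef_S, !S_INR.
    pose proof (pos_INR n). field. lra.
Qed.

Lemma kcoef_unit_interval b n : 0 <= b <= 1 -> 0 <= kcoef b n <= 1.
Proof.
  intros Hb. induction n as [|n IHn]; [simpl; lra|].
  rewrite kcoef_S, S_INR. pose proof (pos_INR n).
  assert (Hratio : 0 <= (b + INR n) / (INR n + 1) <= 1).
  { split; [apply Rdiv_le_0_compat; lra|].
    apply (Rdiv_le_1 (b + INR n)); lra. }
  unfold Rdiv in *. rewrite Rmult_assoc. split; nra.
Qed.

Lemma kcoef_le_S g n : 1 <= g -> 0 <= kcoef g n <= kcoef g (S n).
Proof.
  intros Hg.
  assert (Hstep : forall m, 0 <= kcoef g m -> kcoef g m <= kcoef g (S m)).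
  { intros m Hm. rewrite kcoef_S, S_INR. pose proof (pos_INR m).
    assert (Hratio : 1 <= (g + INR m) / (INR m + 1)).
    { apply Rcomplements.Rle_div_r; lra. }
    unfold Rdiv in *. rewrite Rmult_assoc. nra. }
  induction n as [|n [Hn _]].
  - split; [simpl; lra|]. apply Hstep. simpl. lra.
  - assert (0 <= kcoef g (S n)) by (apply Rle_trans with (kcoef g n); auto).
    split; auto.
Qed.

Lemma kcoef_ge1 g n : 1 <= g -> 1 <= kcoef g n.
Proof.
  intros Hg. induction n as [|n IHn]; [simpl; lra|].
  apply Rle_trans with (kcoef g n); [exact IHn|apply kcoef_le_S, Hg].
Qed.

Lemma kcoef_le_add g n N : 1 <= g -> kcoef g n <= kcoef g (n + N).
Proof.
  intros Hg. induction N as [|N IHN]; [rewrite Nat.add_0_r; lra|].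
  rewrite Nat.add_succ_r. apply Rle_trans with (kcoef g (n + N)); [exact IHN|apply kcoef_le_S, Hg].
Qed.

Lemma Rpower_succ_div_ge x a :
  0 < x -> 0 <= a -> 1 + a / (x + 1) <= Rpower ((x + 1) / x) a.
Proof.
  intros Hx Ha.
  assert (Hexp : exp (1 / (x + 1)) <= (x + 1) / x).
  { pose proof (exp_ineq1_le (- (1 / (x + 1)))) as H.
    rewrite exp_Ropp in H. pose proof (exp_pos (1 / (x + 1))) as Hpos.
    apply Rcomplements.Rle_div_r; [exact Hx|].
    apply (Rmult_le_reg_r (/ exp (1 / (x + 1)))); [apply Rinv_0_lt_compat, Hpos|].
    replace (exp (1 / (x + 1)) * x * / exp (1 / (x + 1))) with x by (field; lra).
    replace (1 + - (1 / (x + 1))) with (x / (x + 1)) in H by (field; lra).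
    apply (Rmult_le_reg_r (/ (x + 1))); [apply Rinv_0_lt_compat; lra|].
    replace ((x + 1) * / exp (1 / (x + 1)) * / (x + 1)) with (/ exp (1 / (x + 1))) by (field; lra).
    exact H. }
  assert (Hln : 1 / (x + 1) <= ln ((x + 1) / x)).
  { rewrite <- (ln_exp (1 / (x + 1))). apply ln_le; [apply exp_pos|exact Hexp]. }
  unfold Rpower. apply Rle_trans with (1 + a * ln ((x + 1) / x)); [|apply exp_ineq1_le].
  apply Rplus_le_compat_l. unfold Rdiv in *. rewrite Rmult_1_l in Hln.
  apply Rmult_le_compat_l; assumption.
Qed.

Lemma kcoef_le_Rpower_S a n :
  0 <= a -> kcoef (a + 1) (S n) <= (a + 1) * Rpower (INR (S n)) a.
Proof.
  intros Ha. induction n as [|n IHn].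
  - simpl. unfold Rpower. rewrite ln_1, Rmult_0_r, exp_0. lra.
  - rewrite kcoef_S.
    set (x := INR (S n)) in *.
    assert (Hx : 0 < x) by (apply lt_0_INR; lia).
    assert (Hsplit : Rpower (INR (S (S n))) a = Rpower x a * Rpower ((x + 1) / x) a).
    { rewrite Rpower_mult_distr by (try apply Rdiv_lt_0_compat; lra).
      f_equal. rewrite S_INR. fold x. field. lra. }
    rewrite Hsplit, (S_INR (S n)). fold x.
    replace (kcoef (a + 1) (S n) * (a + 1 + x) / (x + 1))
      with (kcoef (a + 1) (S n) * (1 + a / (x + 1))) by (field; lra).
    pose proof (kcoef_ge1 (a + 1) (S n) ltac:(lra)).
    pose proof (Rpower_succ_div_ge x a Hx Ha).
    assert (0 <= a / (x + 1)) by (apply Rdiv_le_0_compat; lra).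
    rewrite <- Rmult_assoc. apply Rmult_le_compat; lra.
Qed.

Lemma Rabs_kcoef_S_neg a n :
  a <= INR n -> (INR n + 1) * Rabs (kcoef (- a) (S n)) = (INR n - a) * Rabs (kcoef (- a) n).
Proof.
  intros Hn. pose proof (pos_INR n).
  rewrite kcoef_S, S_INR.
  replace (kcoef (- a) n * (- a + INR n) / (INR n + 1))
    with (kcoef (- a) n * ((INR n - a) / (INR n + 1))) by (field; lra).
  rewrite Rabs_mult, (Rabs_right ((INR n - a) / (INR n + 1)))
    by (apply Rle_ge, Rdiv_le_0_compat; lra).
  field. lra.
Qed.

Lemma sum_f_R0_le_add (t : nat -> R) M d :
  (forall n, 0 <= t n) -> sum_f_R0 t M <= sum_f_R0 t (M + d).
Proof.
  intros Ht. induction d as [|d IHd]; [rewrite Nat.add_0_r; lra|].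
  rewrite Nat.add_succ_r. simpl. pose proof (Ht (S (M + d))). lra.
Qed.

(* For [n >= a] the recursion reads [a |k(n)| = n |k(n)| - (n+1) |k(n+1)|], so the partial
   sums telescope and stay below [sum_(N <= p) |k(N)| + (p+1) |k(p+1)| / a]. *)
Lemma ex_series_Rabs_kcoef_neg a : 0 < a -> ex_series (fun n => Rabs (kcoef (- a) n)).
Proof.
  intros Ha. set (t := fun n => Rabs (kcoef (- a) n)).
  assert (Ht : forall n, 0 <= t n) by (intro; apply Rabs_pos).
  destruct (INR_unbounded a) as [p Hp].
  assert (Htelescope : forall j, a * sum_f_R0 t (p + j) + INR (S (p + j)) * t (S (p + j))
                                 = a * sum_f_R0 t p + INR (S p) * t (S p)).
  { induction j as [|j IHj]; [rewrite Nat.add_0_r; reflexivity|].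
    rewrite <- IHj, Nat.add_succ_r. simpl sum_f_R0.
    assert (Hle : a <= INR (S (p + j))) by (apply Rle_trans with (INR p); [lra|apply le_INR; lia]).
    unfold t. rewrite (S_INR (S (p + j))), (Rabs_kcoef_S_neg a (S (p + j)) Hle). ring. }
  apply (ex_series_of_bounded_sums t (sum_f_R0 t p + INR (S p) * t (S p) / a)); [exact Ht|].
  intro M.
  assert (Hrest : 0 <= INR (S p) * t (S p) / a)
    by (apply Rdiv_le_0_compat; [apply Rmult_le_pos; [apply pos_INR|apply Ht]|exact Ha]).
  apply Rle_trans with (sum_f_R0 t (p + M)); [rewrite Nat.add_comm; apply sum_f_R0_le_add, Ht|].
  pose proof (Htelescope M) as HM.
  assert (0 <= INR (S (p + M)) * t (S (p + M))) by (apply Rmult_le_pos; [apply pos_INR|apply Ht]).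
  apply (Rmult_le_reg_l a); [exact Ha|].
  replace (a * (sum_f_R0 t p + INR (S p) * t (S p) / a))
    with (a * sum_f_R0 t p + INR (S p) * t (S p)) by (field; lra).
  lra.
Qed.

Lemma Cmod_nonneg z : 0 <= Cmod z.
Proof. apply sqrt_pos. Qed.

Lemma Cmod_Cscal r z : Cmod (Cscal r z) = Rabs r * Cmod z.
Proof.
  unfold Cmod, Cscal; simpl.
  replace (r * fst z * (r * fst z) + r * snd z * (r * snd z))
    with ((r * r) * (fst z * fst z + snd z * snd z)) by ring.
  rewrite sqrt_mult_alt by apply Rle_0_sqr.
  f_equal. rewrite <- sqrt_Rsqr_abs. reflexivity.
Qed.

Lemma Rabs_fst_le_Cmod z : Rabs (fst z) <= Cmod z.
Proof.
  unfold Cmod. rewrite <- sqrt_Rsqr_abs. apply sqrt_le_1_alt.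
  unfold Rsqr. pose proof (Rle_0_sqr (snd z)). unfold Rsqr in *. lra.
Qed.

Lemma Rabs_snd_le_Cmod z : Rabs (snd z) <= Cmod z.
Proof.
  unfold Cmod. rewrite <- sqrt_Rsqr_abs. apply sqrt_le_1_alt.
  unfold Rsqr. pose proof (Rle_0_sqr (fst z)). unfold Rsqr in *. lra.
Qed.

Lemma Cmod_le_Rabs_add z : Cmod z <= Rabs (fst z) + Rabs (snd z).
Proof.
  pose proof (Rabs_pos (fst z)). pose proof (Rabs_pos (snd z)).
  unfold Cmod. rewrite <- (sqrt_Rsqr (Rabs (fst z) + Rabs (snd z))) by lra.
  apply sqrt_le_1_alt.
  change (Rsqr (fst z) + Rsqr (snd z) <= Rsqr (Rabs (fst z) + Rabs (snd z))).
  rewrite (Rsqr_abs (fst z)), (Rsqr_abs (snd z)). unfold Rsqr. nra.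
Qed.

Lemma Csum_Cseries u : Csummable u -> Csum u (Cseries u).
Proof.
  intros Hu. unfold Cseries.
  destruct excluded_middle_informative as [Hs|Hn]; [|contradiction].
  exact (proj2_sig (constructive_indefinite_description _ Hs)).
Qed.

Lemma Csummable_of_Cmod_le (u : nat -> Cx) (b : nat -> R) :
  (forall j, Cmod (u j) <= b j) -> ex_series b -> Csummable u.
Proof.
  intros Hub Hb.
  assert (Hpart : forall g : Cx -> R, (forall z, Rabs (g z) <= Cmod z) ->
                    infinite_sum (fun j => g (u j)) (Series (fun j => g (u j)))).
  { intros g Hg. apply is_series_Reals, Series_correct, ex_series_Rabs.
    apply (ex_series_nonneg_le _ b); [|exact Hb].
    intro j. split; [apply Rabs_pos|apply Rle_trans with (Cmod (u j)); auto]. }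
  exists (Series (fun j => fst (u j)), Series (fun j => snd (u j))).
  split; apply Hpart; [apply Rabs_fst_le_Cmod|apply Rabs_snd_le_Cmod].
Qed.

(* The factor 2 comes from bounding the real and imaginary parts separately. *)
Lemma Cmod_Csum_le (u : nat -> Cx) l (b : nat -> R) :
  Csum u l -> (forall j, Cmod (u j) <= b j) -> ex_series b -> Cmod l <= 2 * Series b.
Proof.
  intros [Hfst Hsnd] Hub Hb.
  assert (Hpart : forall (g : Cx -> R) (x : R), (forall z, Rabs (g z) <= Cmod z) ->
                    infinite_sum (fun j => g (u j)) x -> Rabs x <= Series b).
  { intros g x Hg Hx. apply is_series_Reals, is_series_unique in Hx. subst x.
    assert (Habs : ex_series (fun j => Rabs (g (u j)))).
    { apply (ex_series_nonneg_le _ b); [|exact Hb].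
      intro j. split; [apply Rabs_pos|apply Rle_trans with (Cmod (u j)); auto]. }
    apply Rle_trans with (Series (fun j => Rabs (g (u j)))); [exact (Series_Rabs _ Habs)|].
    apply Series_le; [|exact Hb].
    intro j. split; [apply Rabs_pos|apply Rle_trans with (Cmod (u j)); auto]. }
  pose proof (Hpart fst _ Rabs_fst_le_Cmod Hfst).
  pose proof (Hpart snd _ Rabs_snd_le_Cmod Hsnd).
  pose proof (Cmod_le_Rabs_add l). lra.
Qed.

Lemma is_series_kcoef_sub1 (x : nat -> R) g (l1 l2 : R) :
  is_series (fun N => kcoef g N * x N) l1 ->
  is_series (fun N => kcoef g N * x (S N)) l2 ->
  is_series (fun N => kcoef (g - 1) N * x N) (l1 - l2).
Proof.
  intros H1 H2.
  assert (H1' : is_series (fun N => kcoef g (S N) * x (S N)) (l1 - x 0%nat)).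
  { apply (is_series_incr_1 (fun N => kcoef g N * x N)).
    change (is_series (fun N => kcoef g N * x N) (l1 - x 0%nat + 1 * x 0%nat)).
    replace (l1 - x 0%nat + 1 * x 0%nat) with l1 by ring. exact H1. }
  apply (is_series_decr_1 (fun N => kcoef (g - 1) N * x N)).
  change (is_series (fun N => kcoef (g - 1) (S N) * x (S N))
            (l1 - l2 + - (1 * x 0%nat))).
  replace (l1 - l2 + - (1 * x 0%nat)) with (l1 - x 0%nat + - l2) by ring.
  eapply is_series_ext; [|exact (is_series_minus _ _ _ _ H1' H2)].
  intro N. rewrite kcoef_sub1_S.
  change (kcoef g (S N) * x (S N) + - (kcoef g N * x (S N))
          = (kcoef g (S N) - kcoef g N) * x (S N)).
  ring.
Qed.

(* Each [W_+] turns the coefficients [k^g] into [k^{g-1}], by [kcoef_sub1_S]. *)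
Lemma Csum_Wplus_pow_Wneg b (f : nat -> Cx) :
  (forall n, Csummable (Wneg_term b f n)) ->
  forall p n, Csum (Wneg_term (b - INR p) f n) (Wplus_pow p (Wneg b f) n).
Proof.
  intros Hb p. induction p as [|p IHp]; intro n.
  - simpl. rewrite Rminus_0_r. apply Csum_Cseries, Hb.
  - rewrite S_INR. replace (b - (INR p + 1)) with (b - INR p - 1) by ring.
    destruct (IHp n) as [Hfst Hsnd], (IHp (S n)) as [Hfst' Hsnd'].
    assert (Hshift : forall (x : nat -> R) l,
               infinite_sum (fun N => kcoef (b - INR p) N * x (S n + N)%nat) l ->
               is_series (fun N => kcoef (b - INR p) N * x (n + S N)%nat) l).
    { intros x l Hl. apply is_series_Reals in Hl.
      eapply is_series_ext; [|exact Hl]. intro N. rewrite <- plus_n_Sm. reflexivity. }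
    split; apply is_series_Reals, is_series_kcoef_sub1.
    + apply is_series_Reals, Hfst.
    + exact (Hshift (fun L => fst (f L)) _ Hfst').
    + apply is_series_Reals, Hsnd.
    + exact (Hshift (fun L => snd (f L)) _ Hsnd').
Qed.

Lemma mfrac_spec a : 0 <= a -> a < INR (mfrac a) <= a + 1.
Proof.
  intros Ha. unfold mfrac. destruct (archimed a) as [Hup Hup1].
  assert (Hnonneg : (0 <= up a)%Z) by (apply le_IZR; lra).
  rewrite INR_IZR_INZ, Z2Nat.id by exact Hnonneg. lra.
Qed.

Lemma Csum_Wfrac a (f : nat -> Cx) n :
  (forall n, Csummable (Wneg_term (INR (mfrac a) - a) f n)) ->
  Csum (Wneg_term (- a) f n) (Wfrac a f n).
Proof.
  intros Hsum. unfold Wfrac.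
  replace (- a) with (INR (mfrac a) - a - INR (mfrac a)) by ring.
  exact (Csum_Wplus_pow_Wneg _ f Hsum (mfrac a) n).
Qed.

Lemma kcoef_Cmod_Wfrac_le a (f : nat -> Cx) n :
  0 < a ->
  (forall n, Csummable (Wneg_term (INR (mfrac a) - a) f n)) ->
  ex_series (fun L => kcoef (a + 1) L * Cmod (f L)) ->
  kcoef (a + 1) n * Cmod (Wfrac a f n) <=
  2 * Series (fun N => Rabs (kcoef (- a) N) * (kcoef (a + 1) (n + N) * Cmod (f (n + N)%nat))).
Proof.
  intros Ha Hsum HG.
  set (t := fun N => Rabs (kcoef (- a) N)).
  set (c := fun N => t N * (kcoef (a + 1) (n + N) * Cmod (f (n + N)%nat))).
  set (b := fun N => t N * Cmod (f (n + N)%nat)).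
  assert (Hk : forall L, 1 <= kcoef (a + 1) L) by (intro; apply kcoef_ge1; lra).
  assert (Hc : ex_series c).
  { apply (ex_series_mul_shift t (fun L => kcoef (a + 1) L * Cmod (f L))).
    - intro; apply Rabs_pos.
    - intro L. pose proof (Hk L). pose proof (Cmod_nonneg (f L)). nra.
    - exact (ex_series_Rabs_kcoef_neg a Ha).
    - exact HG. }
  assert (Hbc : forall N, 0 <= kcoef (a + 1) n * b N <= c N).
  { intro N. unfold b, c.
    assert (Ht : 0 <= t N) by apply Rabs_pos.
    pose proof (Cmod_nonneg (f (n + N)%nat)). pose proof (Hk n).
    replace (kcoef (a + 1) n * (t N * Cmod (f (n + N)%nat)))
      with (t N * (kcoef (a + 1) n * Cmod (f (n + N)%nat))) by ring.
    split; [apply Rmult_le_pos; nra|].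
    apply Rmult_le_compat_l; [exact Ht|].
    apply Rmult_le_compat_r; [lra|apply kcoef_le_add; lra]. }
  assert (Hb : ex_series b).
  { apply (ex_series_nonneg_le _ c); [|exact Hc].
    intro N. destruct (Hbc N). pose proof (Hk n).
    assert (0 <= b N) by (apply Rmult_le_pos; [apply Rabs_pos|apply Cmod_nonneg]). split; nra. }
  assert (Hmod : Cmod (Wfrac a f n) <= 2 * Series b).
  { apply (Cmod_Csum_le (Wneg_term (- a) f n)); [exact (Csum_Wfrac a f n Hsum)| |exact Hb].
    intro N. unfold Wneg_term. rewrite Cmod_Cscal. apply Rle_refl. }
  assert (Hshift : kcoef (a + 1) n * Series b <= Series c).
  { rewrite <- Series_scal_l. apply Series_le; [exact Hbc|exact Hc]. }
  change (kcoef (a + 1) n * Cmod (Wfrac a f n) <= 2 * Series c).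
  pose proof (Hk n).
  apply Rle_trans with (2 * (kcoef (a + 1) n * Series b)); [|lra].
  replace (2 * (kcoef (a + 1) n * Series b)) with (kcoef (a + 1) n * (2 * Series b)) by ring.
  apply Rmult_le_compat_l; lra.
Qed.

Lemma ex_series_kcoef_Cmod_Wfrac a (f : nat -> Cx) :
  0 < a ->
  (forall n, Csummable (Wneg_term (INR (mfrac a) - a) f n)) ->
  ex_series (fun L => kcoef (a + 1) L * Cmod (f L)) ->
  ex_series (fun n => kcoef (a + 1) n * Cmod (Wfrac a f n)).
Proof.
  intros Ha Hsum HG.
  set (t := fun N => Rabs (kcoef (- a) N)).
  set (G := fun L => kcoef (a + 1) L * Cmod (f L)).
  assert (Hk : forall L, 1 <= kcoef (a + 1) L) by (intro; apply kcoef_ge1; lra).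
  apply (ex_series_of_bounded_sums _ (2 * (Series t * Series G))).
  - intro n. pose proof (Hk n). pose proof (Cmod_nonneg (Wfrac a f n)). nra.
  - intro M. apply Rle_trans with (sum_f_R0 (fun n => Series (fun N => t N * G (n + N)%nat) * 2) M).
    + apply sum_Rle. intros n _. rewrite (Rmult_comm (Series _) 2).
      exact (kcoef_Cmod_Wfrac_le a f n Ha Hsum HG).
    + rewrite <- scal_sum. apply Rmult_le_compat_l; [lra|].
      apply sum_Series_mul_shift_le; [intro; apply Rabs_pos| |exact (ex_series_Rabs_kcoef_neg a Ha)|exact HG].
      intro L. pose proof (Hk L). pose proof (Cmod_nonneg (f L)). unfold G. nra.
Qed.

Lemma ex_series_kcoef_Cmod a (f : nat -> Cx) :
  0 <= a -> ex_series (fun n => npow n a * Cmod (f n)) ->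
  ex_series (fun L => kcoef (a + 1) L * Cmod (f L)).
Proof.
  intros Ha Hf. apply ex_series_incr_1.
  apply (ex_series_nonneg_le _ (fun L => npow (S L) a * Cmod (f (S L)) * (a + 1))).
  - intro L. pose proof (Cmod_nonneg (f (S L))). split.
    + apply Rmult_le_pos; [|assumption]. pose proof (kcoef_ge1 (a + 1) (S L)). lra.
    + replace (npow (S L) a * Cmod (f (S L)) * (a + 1))
        with ((a + 1) * Rpower (INR (S L)) a * Cmod (f (S L))) by (simpl; ring).
      apply Rmult_le_compat_r; [assumption|apply kcoef_le_Rpower_S, Ha].
  - exact (ex_series_scal_r _ _ (proj1 (ex_series_incr_1 _) Hf)).
Qed.

Lemma Csummable_Wneg_term b (f : nat -> Cx) n :
  0 <= b <= 1 -> ex_series (fun L => Cmod (f L)) -> Csummable (Wneg_term b f n).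
Proof.
  intros Hb Hf. apply (Csummable_of_Cmod_le _ (fun j => Cmod (f (n + j)%nat))).
  - intro j. unfold Wneg_term. rewrite Cmod_Cscal.
    destruct (kcoef_unit_interval b j Hb).
    pose proof (Cmod_nonneg (f (n + j)%nat)).
    rewrite Rabs_right by lra. nra.
  - exact (proj1 (ex_series_incr_n _ n) Hf).
Qed.

Theorem mainTheorem10 (alpha : R) (f : nat -> Cx) :
  0 < alpha ->
  Rsummable (fun n => npow n alpha * Cmod (f n)) ->
  (forall n, Csummable (Wneg_term (INR (mfrac alpha) - alpha) f n)) /\
  Rsummable (fun n => kcoef (alpha + 1) n * Cmod (Wfrac alpha f n)).
Proof.
  intros Ha [l Hl].
  assert (HG : ex_series (fun L => kcoef (alpha + 1) L * Cmod (f L))).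
  { apply ex_series_kcoef_Cmod; [lra|]. exists l. apply is_series_Reals, Hl. }
  assert (HF : ex_series (fun L => Cmod (f L))).
  { refine (ex_series_nonneg_le _ _ _ HG). intro L.
    pose proof (kcoef_ge1 (alpha + 1) L ltac:(lra)). pose proof (Cmod_nonneg (f L)). split; nra. }
  assert (Hneg : forall n, Csummable (Wneg_term (INR (mfrac alpha) - alpha) f n)).
  { intro n. apply Csummable_Wneg_term; [|exact HF].
    pose proof (mfrac_spec alpha ltac:(lra)). lra. }
  split; [exact Hneg|].
  exists (Series (fun n => kcoef (alpha + 1) n * Cmod (Wfrac alpha f n))).
  apply is_series_Reals, Series_correct, ex_series_kcoef_Cmod_Wfrac; assumption.
Qed.
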